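(* Let $f_0\in\mathbb{R}$, $g\in\mathbb{R}^n$, $H$ a symmetric $n\times n$ matrix, $\sigma>0$, and $m(s)=f_0+\langle g,s\rangle+\frac12\langle Hs,s\rangle+\frac16\sigma\|s\|^3$. Let $s_k\in\mathbb{R}^n$ with $m(s_k)\le m(0)$, set $g_k=g+Hs_k$, and assume $\|g_k\|_{r,1}\ge\frac12\sigma\|s_k\|^2$. Let $d_k$ be a minimizer of $\langle g_k,v\rangle$ over $\{v:\|v\|=1\}$, let $\alpha_k^C$ be a minimizer of $\alpha\mapsto m(s_k+\alpha d_k)$ over $\alpha\ge0$, and $s_k^C=s_k+\alpha_k^Cd_k$. Then $$m(s_k)-m(s_k^C)\ge\frac12\min\left[\frac{\big|\|g_k\|_{r,1}-\frac12\sigma\|s_k\|^2\big|^2}{1+\frac32(\|H\|_{r,2}+\sigma\|s_k\|)},\ \frac{\big|\|g_k\|_{r,1}-\frac12\sigma\|s_k\|^2\big|^{3/2}}{3\sqrt\sigma}\right].$$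
   Context: $\|\cdot\|$ is an arbitrary (possibly non-smooth) norm on $\mathbb{R}^n$, $\langle\cdot,\cdot\rangle$ the Euclidean inner product, $\|v\|_{r,1}=\max_{\|s\|=1}|\langle v,s\rangle|$ the dual norm, and for a symmetric matrix $H$, $\|H\|_{r,2}=\max_{\|v\|=1}|\langle Hv,v\rangle|$. *)

From HB Require Import structures.
From mathcomp Require Import all_boot all_order all_algebra.
From mathcomp Require Import all_classical all_reals all_analysis.
Set Implicit Arguments. Unset Strict Implicit. Unset Printing Implicit Defensive.
Import Order.TTheory GRing.Theory Num.Theory.
Local Open Scope ring_scope.
Local Open Scope classical_set_scope.

Definition dotp (R : realType) (n : nat) (u v : 'cV[R]_n) : R :=
  \sum_(i < n) u i 0 * v i 0.

Definition is_norm (R : realType) (n : nat) (N : 'cV[R]_n -> R) : Prop :=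
  [/\ forall x, 0 <= N x,
      forall x, N x = 0 -> x = 0,
      forall (a : R) x, N (a *: x) = `|a| * N x
    & forall x y, N (x + y) <= N x + N y].

(* Dual norm: ||v||_{r,1} = max_{||s||=1} |<v,s>| (written as a sup) *)
Definition dualnorm (R : realType) (n : nat) (N : 'cV[R]_n -> R) (v : 'cV[R]_n) : R :=
  sup [set `|dotp v s| | s in [set s | N s = 1]].

(* ||H||_{r,2} = max_{||v||=1} |<Hv,v>| (written as a sup) *)
Definition matnorm (R : realType) (n : nat) (N : 'cV[R]_n -> R) (H : 'M[R]_n) : R :=
  sup [set `|dotp (H *m v) v| | v in [set v | N v = 1]].

Definition cubic_model (R : realType) (n : nat) (N : 'cV[R]_n -> R)
  (f0 : R) (g : 'cV[R]_n) (H : 'M[R]_n) (sigma : R) (s : 'cV[R]_n) : R :=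
  f0 + dotp g s + 2^-1 * dotp (H *m s) s + sigma / 6%:R * N s ^+ 3.

From HB Require Import structures.
From mathcomp Require Import all_boot all_order all_algebra.
From mathcomp Require Import all_classical all_reals all_analysis.
Import Order.TTheory GRing.Theory Num.Theory.
From mathcomp Require Import ring lra.
Import numFieldNormedType.Exports.
Local Open Scope ring_scope.
Local Open Scope classical_set_scope.

(* Write g_k = g + H s_k, G = ||g_k||_{r,1} - sigma/2 ||s_k||^2 >= 0 and
   B = ||H||_{r,2} + sigma ||s_k||.  The proof has three ingredients.
   1. Since d_k minimises <g_k,.> on the unit sphere, which is symmetric,
      ||g_k||_{r,1} = -<g_k,d_k>; and |<H d_k,d_k>| <= ||H||_{r,2}, where the
      supremum defining ||H||_{r,2} is finite because any norm dominates a
      multiple of the sup-norm (compactness of the sup-norm unit sphere).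
   2. Expanding the model and using ||s_k + a d_k|| <= ||s_k|| + a gives, for
      every step a >= 0,
        m(s_k) - m(s_k + a d_k) >= a G - a^2/2 B - sigma/6 a^3.
   3. A scalar estimate: for a = min(G/(1 + 3/2 B), sqrt(G/sigma)) the right
      hand side is at least a G / 2, which dominates the claimed minimum.
   Since alpha_k^C minimises the model along d_k, its decrease is at least
   the one obtained with that particular step a. *)

Section NormFacts.
Context {R : realType} {n : nat} {N : 'cV[R]_n -> R}.
Hypothesis hN : is_norm N.

Lemma norm_ge0 x : 0 <= N x. Proof. by case: hN. Qed.
Lemma normZ a x : N (a *: x) = `|a| * N x. Proof. by case: hN. Qed.
Lemma normD x y : N (x + y) <= N x + N y. Proof. by case: hN. Qed.
Lemma norm_eq0 x : N x = 0 -> x = 0. Proof. by case: hN => _ h _ _; apply: h. Qed.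
Lemma norm0 : N 0 = 0. Proof. by rewrite -(scale0r 0) normZ normr0 mul0r. Qed.
Lemma normN x : N (- x) = N x. Proof. by rewrite -scaleN1r normZ normrN normr1 mul1r. Qed.

Lemma norm_dist x y : `|N x - N y| <= N (x - y).
Proof.
have le_sub u v : N u - N v <= N (u - v).
  by rewrite lerBlDr; apply: le_trans (normD _ _); rewrite subrK.
rewrite ler_norml le_sub andbT -(normN (x - y)) opprB.
by rewrite lerNl opprB le_sub.
Qed.

Lemma norm_sum (I : finType) (F : I -> 'cV[R]_n) : N (\sum_i F i) <= \sum_i N (F i).
Proof.
elim/big_ind2: _ => [|x1 x2 y1 y2 h1 h2|//]; first by rewrite norm0.
by apply: le_trans (normD _ _) _; apply: lerD.
Qed.

Lemma entry_le_mx_norm (r : 'rV[R]_n) i : `|r 0 i| <= `|r|.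
Proof.
have /mapP[j _ ->] : `|r 0 i| \in [seq `|r x.1 x.2| | x : 'I_1 * 'I_n].
  by apply/mapP; exists (0, i) => //=; rewrite mem_enum.
change (`|r j.1 j.2| <= mx_norm r); rewrite mx_normrE.
by apply/bigmax_geP; right; exists j.
Qed.

Definition basis_norm_sum : R := \sum_i N (delta_mx i 0 : 'cV[R]_n).

Lemma norm_le_mx_norm (r : 'rV[R]_n) : N r^T <= basis_norm_sum * `|r|.
Proof.
have -> : r^T = \sum_i r 0 i *: (delta_mx i 0 : 'cV[R]_n).
  apply/matrixP => i j; rewrite !mxE summxE (bigD1 i) //= big1 => [|k ki].
    by rewrite !mxE ord1 !eqxx mulr1 addr0.
  by rewrite !mxE eq_sym (negbTE ki) mulr0.
apply: le_trans; first exact: norm_sum.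
rewrite /basis_norm_sum mulr_suml; apply: ler_sum => i _.
by rewrite normZ mulrC ler_wpM2l ?norm_ge0 ?entry_le_mx_norm.
Qed.

Lemma norm_continuous_rV : continuous (fun r : 'rV[R]_n => N r^T).
Proof.
move=> r; have F : Filter (nbhs r) := nbhs_filter r.
apply/(@cvgrPdist_le _ _ _ (nbhs r) F) => e e0.
have K0 : 0 <= basis_norm_sum by apply: sumr_ge0 => i _; apply: norm_ge0.
have K1 : 0 < basis_norm_sum + 1 by apply: ltr_wpDl.
have close := @cvgr_dist_le _ _ _ (nbhs r) F id r cvg_id _ (divr_gt0 e0 K1).
near=> y.
have hy : `|r - y| <= e / (basis_norm_sum + 1) by near: y; exact: close.
apply: le_trans (norm_dist _ _) _; rewrite -linearB.
apply: le_trans (norm_le_mx_norm _) _.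
apply: le_trans (ler_wpM2l K0 hy) _.
rewrite mulrA ler_pdivrMr //; nra.
Unshelve. all: by end_near.
Qed.

(* Conversely, [N] dominates a positive multiple of the sup-norm: the
   minimum of [N] on the compact sup-norm unit sphere is positive. *)
Lemma norm_ge_mx_norm (x0 : 'cV[R]_n) : x0 != 0 ->
  exists2 c, 0 < c & forall x, c * `|x^T| <= N x.
Proof.
move=> x00.
pose S := [set r : 'rV[R]_n | `|r| = 1].
have trmx_neq0 (x : 'cV[R]_n) : x != 0 -> `|x^T| != 0.
  move=> xn0; rewrite normr_eq0; apply: contra xn0 => /eqP xT0.
  by apply/eqP; apply: trmx_inj; rewrite xT0 trmx0.
have normalise_in_S (x : 'cV[R]_n) : x != 0 -> S (`|x^T|^-1 *: x^T).
  move=> /trmx_neq0 xn; rewrite /S /= normrZ ger0_norm ?invr_ge0 //.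
  by rewrite mulVf.
have S_compact : compact S.
  apply: bounded_closed_compact.
    by exists 1; split => // M M1 r /= ->; apply: ltW.
  have -> : S = Num.norm @^-1` [set x : R | x = 1] by [].
  apply: preimage_closed; last exact: closed_eq.
  by move=> x _; apply: norm_continuous.
have S_nonempty : S !=set0 by exists (`|x0^T|^-1 *: x0^T); apply: normalise_in_S.
have [c0 c0S minc] := compact_EVT_min S_nonempty S_compact
  (continuous_subspaceT norm_continuous_rV).
have c0S' : S c0 by rewrite inE in c0S.
exists (N c0^T).
  rewrite lt_def norm_ge0 andbT; apply: contraPN c0S' => /eqP /norm_eq0 c0T0.
  have -> : c0 = 0 by apply: trmx_inj; rewrite c0T0 trmx0.
  by rewrite /S /= normr0 => /esym/eqP; rewrite oner_eq0.
move=> x; have [->|xn0] := eqVneq x 0; first by rewrite trmx0 normr0 mulr0 norm_ge0.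
have := minc _ (mem_set (normalise_in_S _ xn0)).
rewrite linearZ /= trmxK normZ ger0_norm ?invr_ge0 //.
have xp : 0 < `|x^T| by rewrite lt_def trmx_neq0 // normr_ge0.
by rewrite ler_pdivlMl // mulrC.
Qed.

Lemma unit_sphere_bounded :
  exists b : R, forall v, N v = 1 -> forall i, `|v i 0| <= b.
Proof.
have [[v0 hv0]|none] := pselect (exists v, N v = 1); last first.
  by exists 0 => v hv; exfalso; apply: none; exists v.
have v00 : v0 != 0.
  by apply: contra_eqN hv0 => /eqP ->; rewrite norm0 eq_sym oner_eq0.
have [c c0 hc] := norm_ge_mx_norm _ v00.
exists c^-1 => v hv i; rewrite -[c^-1]mulr1 ler_pdivlMl //.
rewrite -hv; apply: le_trans (hc v); apply: ler_wpM2l; first exact: ltW.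
by have := entry_le_mx_norm v^T i; rewrite mxE.
Qed.

End NormFacts.

Section InnerProduct.
Context {R : realType} {n : nat}.
Implicit Types (u v w : 'cV[R]_n).

Lemma dotpC u v : dotp u v = dotp v u.
Proof. by apply: eq_bigr => i _; rewrite mulrC. Qed.

Lemma dotpDr u v w : dotp u (v + w) = dotp u v + dotp u w.
Proof. by rewrite /dotp -big_split; apply: eq_bigr => i _; rewrite mxE mulrDr. Qed.

Lemma dotpDl u v w : dotp (v + w) u = dotp v u + dotp w u.
Proof. by rewrite dotpC dotpDr !(dotpC u). Qed.

Lemma dotpZr u a v : dotp u (a *: v) = a * dotp u v.
Proof. by rewrite /dotp mulr_sumr; apply: eq_bigr => i _; rewrite mxE mulrCA. Qed.

Lemma dotpZl u a v : dotp (a *: v) u = a * dotp v u.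
Proof. by rewrite dotpC dotpZr dotpC. Qed.

Lemma dotpNr u v : dotp u (- v) = - dotp u v.
Proof. by rewrite -scaleN1r dotpZr mulN1r. Qed.

Lemma dotp_sym_mx (H : 'M[R]_n) u v : H^T = H -> dotp (H *m u) v = dotp (H *m v) u.
Proof.
move=> symH; rewrite /dotp.
under eq_bigr => i _ do rewrite mxE mulr_suml.
under [RHS]eq_bigr => i _ do rewrite mxE mulr_suml.
rewrite exchange_big /=; apply: eq_bigr => i _; apply: eq_bigr => j _.
by rewrite -[in RHS]symH mxE mulrAC.
Qed.

Lemma quadform_bound (H : 'M[R]_n) v b : (forall i, `|v i 0| <= b) ->
  `|dotp (H *m v) v| <= \sum_i \sum_j `|H i j| * b ^+ 2.
Proof.
move=> vb; rewrite /dotp; apply: le_trans (ler_norm_sum _ _ _) _.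
apply: ler_sum => i _; rewrite mxE mulr_suml.
apply: le_trans (ler_norm_sum _ _ _) _; apply: ler_sum => j _.
have b0 : 0 <= b by apply: le_trans (vb i).
by rewrite !normrM -mulrA ler_wpM2l // expr2 ler_pM.
Qed.

End InnerProduct.

Lemma sup_attained (R : realType) (E : set R) x : E x -> ubound E x -> sup E = x.
Proof.
move=> Ex ubx; apply/le_anti/andP; split; first by apply: ge_sup => //; exists x.
by apply: sup_upper_bound => //; split; exists x.
Qed.

(* If d minimises <v,.> on the unit sphere, then by symmetry of the sphere
   |<v,s>| <= -<v,d> for every unit s, so the dual norm of v is -<v,d>. *)
Lemma dualnorm_minimizer {R : realType} {n : nat} {N : 'cV[R]_n -> R} v d :
  is_norm N -> N d = 1 ->
  (forall s, N s = 1 -> dotp v d <= dotp v s) ->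
  dualnorm N v = - dotp v d.
Proof.
move=> hN unit_d dmin.
have abs_le s : N s = 1 -> `|dotp v s| <= - dotp v d.
  move=> unit_s; have := dmin (- s); rewrite normN // dotpNr => /(_ unit_s).
  by have := dmin s unit_s; rewrite ler_norml; lra.
apply: sup_attained; last by move=> _ [s /= /abs_le le <-].
exists d => //; apply: ler0_norm.
by have := abs_le d unit_d; rewrite ler_norml => /andP[_]; lra.
Qed.

(* On the unit sphere the quadratic form is bounded by ||H||_{r,2}; the
   supremum is finite since the sphere is coordinatewise bounded. *)
Lemma quadform_le_matnorm {R : realType} {n : nat} {N : 'cV[R]_n -> R}
    (H : 'M[R]_n) v :
  is_norm N -> N v = 1 -> `|dotp (H *m v) v| <= matnorm N H.
Proof.
move=> hN unit_v; have [b sphere_b] := unit_sphere_bounded hN.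
apply: sup_upper_bound; last by exists v.
split; first by exists `|dotp (H *m v) v|, v.
exists (\sum_i \sum_j `|H i j| * b ^+ 2) => _ [u /= unit_u <-].
exact/quadform_bound/sphere_b.
Qed.

Section CubicModel.
Variables (R : realType) (n : nat) (N : 'cV[R]_n -> R).
Variables (f0 : R) (g : 'cV[R]_n) (H : 'M[R]_n) (sigma : R).
Hypothesis symH : H^T = H.

Local Notation m := (cubic_model N f0 g H sigma).

Lemma cubic_model_decrease s d a :
  m s - m (s + a *: d) =
  - a * dotp (g + H *m s) d - a ^+ 2 / 2 * dotp (H *m d) d
  - sigma / 6%:R * (N (s + a *: d) ^+ 3 - N s ^+ 3).
Proof.
rewrite /cubic_model mulmxDr -scalemxAr.
rewrite !dotpDr !dotpDl !dotpZr !dotpZl (@dotp_sym_mx _ _ _ d s symH).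
by field.
Qed.

Hypotheses (hN : is_norm N) (sigma_gt0 : 0 < sigma).

(* Lower bound for the decrease along a unit direction, where M bounds the
   curvature <H d,d>: the cubic term grows at most like (N s + a)^3. *)
Lemma cubic_model_decrease_ge s d a M :
  N d = 1 -> 0 <= a -> dotp (H *m d) d <= M ->
  a * (- dotp (g + H *m s) d - sigma / 2 * N s ^+ 2)
    - a ^+ 2 / 2 * (M + sigma * N s) - sigma / 6%:R * a ^+ 3
  <= m s - m (s + a *: d).
Proof.
move=> unit_d a0 curvM; rewrite cubic_model_decrease.
have t0 : 0 <= N (s + a *: d) := norm_ge0 hN _.
have s0 : 0 <= N s := norm_ge0 hN _.
have tri : N (s + a *: d) <= N s + a.
  by apply: le_trans (normD hN _ _) _; rewrite normZ // unit_d mulr1 ger0_norm.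
have cube : N (s + a *: d) ^+ 3 <= (N s + a) ^+ 3.
  by apply: lerXn2r => //; rewrite nnegrE; lra.
have curv : a ^+ 2 * dotp (H *m d) d <= a ^+ 2 * M.
  by apply: ler_wpM2l => //; apply: sqr_ge0.
have scube : sigma * N (s + a *: d) ^+ 3 <= sigma * (N s + a) ^+ 3.
  by apply: ler_wpM2l => //; apply: ltW.
lra.
Qed.

End CubicModel.

Lemma cubic_step_half_gain {R : realType} {G B sigma a : R} :
  0 <= a -> a * (1 + 3%:R / 2 * B) <= G -> sigma * a ^+ 2 <= G ->
  a * G / 2 <= a * G - a ^+ 2 / 2 * B - sigma / 6%:R * a ^+ 3.
Proof.
move=> a0 lin quad.
have p1 : a * (a * (1 + 3%:R / 2 * B)) <= a * G by apply: ler_wpM2l.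
have p2 : a * (sigma * a ^+ 2) <= a * G by apply: ler_wpM2l.
have p3 := sqr_ge0 a; nra.
Qed.

Lemma cauchy_step_half_gain {R : realType} {G B sigma : R} :
  0 <= G -> 0 <= B -> 0 < sigma ->
  let a := Num.min (G / (1 + 3%:R / 2 * B)) (Num.sqrt (G / sigma)) in
  0 <= a /\ a * G / 2 <= a * G - a ^+ 2 / 2 * B - sigma / 6%:R * a ^+ 3.
Proof.
move=> G0 B0 sigma0 a.
have a0 : 0 <= a by rewrite le_min divr_ge0 ?sqrtr_ge0 //; lra.
split=> //; apply: cubic_step_half_gain => //.
  by rewrite -ler_pdivlMr ?ge_min ?lexx //; lra.
rewrite mulrC -ler_pdivlMr // -(sqr_sqrtr (divr_ge0 G0 (ltW sigma0))).
by rewrite lerXn2r ?nnegrE ?sqrtr_ge0 // ge_min lexx orbT.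
Qed.

Lemma cauchy_min_le_step {R : realType} {G B sigma : R} :
  0 <= G -> 0 <= B -> 0 < sigma ->
  Num.min (G ^+ 2 / (1 + 3%:R / 2 * B)) (G `^ (3%:R / 2) / (3%:R * Num.sqrt sigma))
  <= Num.min (G / (1 + 3%:R / 2 * B)) (Num.sqrt (G / sigma)) * G.
Proof.
move=> G0 B0 sigma0.
set a1 := G / (1 + 3%:R / 2 * B); set a2 := Num.sqrt (G / sigma).
have a20 : 0 <= a2 := sqrtr_ge0 _.
case: (leP a1 a2) => _; rewrite ge_min; apply/orP; [left|right].
  by rewrite /a1 expr2 mulrAC.
have e32 : 3%:R / 2 = 1 + 2^-1 :> R by field.
have e32_gt0 : 0 < 1 + 2^-1 :> R by lra.
rewrite e32 powRD; last by rewrite gt_eqF.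
rewrite powRr1 // powR12_sqrt //.
have sq0 : 0 < Num.sqrt sigma by rewrite sqrtr_gt0.
have a2_sqrt : a2 * Num.sqrt sigma = Num.sqrt G.
  rewrite /a2 -sqrtrM; last by apply: divr_ge0 => //; apply: ltW.
  by rewrite divfK // gt_eqF.
rewrite -a2_sqrt ler_pdivrMr; last by apply: mulr_gt0 => //; lra.
have : 0 <= a2 * G by apply: mulr_ge0.
nra.
Qed.

Theorem lemma5p2 (R : realType) (n : nat) (N : 'cV[R]_n -> R)
  (f0 : R) (g : 'cV[R]_n) (H : 'M[R]_n) (sigma : R)
  (sk dk : 'cV[R]_n) (alphak : R) :
  is_norm N ->
  H^T = H ->
  0 < sigma ->
  cubic_model N f0 g H sigma sk <= cubic_model N f0 g H sigma 0 ->
  sigma / 2 * N sk ^+ 2 <= dualnorm N (g + H *m sk) ->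
  N dk = 1 ->
  (forall v, N v = 1 -> dotp (g + H *m sk) dk <= dotp (g + H *m sk) v) ->
  0 <= alphak ->
  (forall a, 0 <= a ->
     cubic_model N f0 g H sigma (sk + alphak *: dk)
       <= cubic_model N f0 g H sigma (sk + a *: dk)) ->
  let gap := `|dualnorm N (g + H *m sk) - sigma / 2 * N sk ^+ 2| in
  cubic_model N f0 g H sigma sk
    - cubic_model N f0 g H sigma (sk + alphak *: dk)
  >= 2^-1 * Num.min
       (gap ^+ 2 / (1 + 3%:R / 2 * (matnorm N H + sigma * N sk)))
       (gap `^ (3%:R / 2) / (3%:R * Num.sqrt sigma)).
Proof.
move=> hN symH sigma0 _ gap_ge unit_dk dk_min _ alphak_min; cbv zeta.
set gk := g + H *m sk; set M := matnorm N H; set B := M + sigma * N sk.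
have dual_gk : dualnorm N gk = - dotp gk dk := dualnorm_minimizer gk dk hN unit_dk dk_min.
have curv : `|dotp (H *m dk) dk| <= M := quadform_le_matnorm H dk hN unit_dk.
set G := dualnorm N gk - sigma / 2 * N sk ^+ 2.
have G0 : 0 <= G by rewrite subr_ge0.
have M0 : 0 <= M := le_trans (normr_ge0 _) curv.
have B0 : 0 <= B := addr_ge0 M0 (mulr_ge0 (ltW sigma0) (norm_ge0 hN _)).
rewrite ger0_norm //.
have [al0 gain] := cauchy_step_half_gain G0 B0 sigma0.
set al := Num.min _ _ in al0 gain.
have decrease := @cubic_model_decrease_ge _ _ N f0 g H sigma symH hN sigma0
  sk dk al M unit_dk al0 (le_trans (ler_norm _) curv).
rewrite -dual_gk -/G -/B in decrease.
have best := alphak_min al al0.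
have min_le := cauchy_min_le_step G0 B0 sigma0; rewrite -/al in min_le.
lra.
Qed.
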